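(* Suppose every agent $a\in\mathcal A$ satisfies assumptions (A1)–(A8) below and (A9), (A10) hold. Fix initial conditions $(x_0^a,\theta_0^a)\in\mathcal X\times\Theta$ and past incentives $\{\pi^a_i\}_{i=0}^T$ for all $a\in\mathcal A$. Then a solution of $\min\{\Phi(x_0^a,\theta_0^a,\{\pi^a_i\}_{i=0}^{T+n}\text{ for }a\in\mathcal A):\{\{\pi^a_t\}_{t=T+1}^{T+n}\text{ for }a\in\mathcal A\}\in\Omega\}$ is given by the algorithm ABMA described below but with its Step 2 replaced by the step: set $(\hat x^a_{0,T},\hat\theta^a_{0,T})=(x_0^a,\theta_0^a)$.
   Context: Single-agent model (each agent $a$ in the finite set $\mathcal A$ follows it with its own quantities indexed by $a$). Let $\mathcal X,\mathcal U,\Pi,\Theta$ be compact finite-dimensional sets with $\mathcal X,\mathcal U,\Theta$ convex. At each discrete time $t$ the agent has system state $x_t\in\mathcal X$, motivational state $\theta_t\in\Theta$; the coordinator applies $\pi_t\in\Pi$. The agent decides $u_t\in\arg\max\{f(x_{t+1},u,\theta_t,\pi_t):x_{t+1}=h(x_t,u),u\in\mathcal U\}$, and $x_{t+1}=h(x_t,u_t)$, $\theta_{t+1}=g(x_t,u_t,\theta_t,\pi_t)$. Observations $\tilde x_{t_i}=Dx_{t_i}+\nu_{t_i}$, $\tilde y_{\tau_i}=Cu_{\tau_i}+\omega_{\tau_i}$; $C,D$ known; $p_\nu,p_\omega$ noise densities; $(a;b)$ is vertical concatenation. Assumptions: (A1) $\mathcal X,\mathcal U,\Pi,\Theta$ bounded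 finite-dimensional; $\mathcal X,\mathcal U,\Theta$ convex polyhedra given by finitely many linear inequalities; $\Pi$ given by finitely many mixed integer linear constraints. (A2) $f$ deterministic, concave in $x$, strictly concave in $u$, concave in $\theta$, $f(x,u,\theta,\pi)=-(x;u)^TQ(x;u)+(\theta;\pi)^TH(x;u)+\sum_{i=1}^K\min_{j\in J_i}\{F_{i,j}(x;u;\theta;\pi)+\zeta_{i,j}\}$, $Q\succeq0$. (A3) $h,g$ deterministic surjective, $h(x,u)=Ax+Bu+k$, $g(x,u,\theta,\pi)=G_i(x;u;\theta;\pi)+\chi_i$ when $B_i(x;u;\theta;\pi)\le\psi_i$ (finitely many $i$, polytopes with disjoint interiors). (A4) Noises i.i.d. with i.i.d. components, zero mean, known finite variance; $\log p_\nu,\log p_\omega$ expressible by integer linear constraints. (A5) Observability: for some $T$ and incentive sequence, $(x_0,\theta_0)$ is exactly computable from noiseless measurements on $0\le t\le T$. (A6) Prior density $p(x_0,\theta_0)>0$ on $\mathcal X\times\Theta$ with $\log p$ expressible by finitely many mixed integer linear constraints. (A7) Sufficient excitation: with $(x_0^*,\theta_0^* )$ the true initial condition and $\mathcal E(\delta)$ the complement in $\mathcal X\times\Theta$ of its open $\delta$-ball, almost surely for all $\delta>0$, $\max_{\mathcal E(\delta)}\lim_{T\to\infty}\big[\sum_i\log\frac{p_\nu(\tilde x_{t_i}-D\bar x_{t_i})}{p_\nu(\tilde x_{t_i}-Dx_{t_i})}+\sum_j\log\frac{p_\omega(\tilde y_{\tau_j}-C\bar u_{\tau_j})}{p_\omega(\tilde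 y_{\tau_j}-Cu_{\tau_j})}\big]=-\infty$. (A8) The agent's bounded loss $\ell^a:\mathcal X^n\times\mathcal U^n\to\mathbb R$ is described by mixed integer linear constraints. Definitions. $\psi^a_T(\bar x_0,\bar\theta_0)$: maximum over trajectories of $\sum_i\log p_\nu(\tilde x_{t_i}-Dx_{t_i})+\sum_j\log p_\omega(\tilde y_{\tau_j}-Cu_{\tau_j})+\log p(x_0,\theta_0)$ subject to decision rule and dynamics (applied incentives), $x_t\in\mathcal X,\theta_t\in\Theta$, $x_0=\bar x_0,\theta_0=\bar\theta_0$. $\varphi^a(\bar x_0,\bar\theta_0,\{\bar\pi_i\}_{i=0}^{T+n})$: minimum of $\ell^a(\{x_t,u_t\}_{t=T+1}^{T+n})$ over trajectories satisfying decision rule and dynamics with $x_0=\bar x_0,\theta_0=\bar\theta_0,\pi_t=\bar\pi_t$. (A9) The joint loss is separable, taken additively: $\Phi(x_0^a,\theta_0^a,\{\pi^a_i\}_{i=0}^{T+n}\text{ for }a\in\mathcal A)=\sum_a\varphi^a(x_0^a,\theta_0^a,\{\pi^a_i\}_{i=0}^{T+n})$ (the multiplicative case reduces to this by logarithms). (A10) There exist a finite set $V$ of vectors, compact sets $S_v\subseteq\Pi^n$ representable by finitely many mixed integer linear constraints, and a vector $\beta$ such that $\Omega=\{\{\pi^a_i\}_{i=T+1}^{T+n}\text{ for }a\in\mathcal A:\exists\,y^a_v\in\{0,1\},\ \sum_vy^a_v=1\ \forall a,\ \sum_a\sum_v v\,y^a_v\le\beta,\ \{\pi^a_i\}_{i=T+1}^{T+n}\in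 S_v\text{ if }y^a_v=1\}$. Algorithm ABMA (at time $T$): for each $a\in\mathcal A$: Step 2: compute $(\hat x^a_{0,T},\hat\theta^a_{0,T})\in\arg\max\psi^a_T$; for each $v\in V$ (Steps 4–5): set $\pi^a_v\in\arg\min\{\varphi^a(\hat x^a_{0,T},\hat\theta^a_{0,T},\{\pi_i\}_{i=0}^{T+n}):\{\pi_i\}_{i=T+1}^{T+n}\in S_v\}$ (with $\pi_0,\dots,\pi_T$ the given past incentives of agent $a$) and $\phi^a_v=\varphi^a(\hat x^a_{0,T},\hat\theta^a_{0,T},\pi^a_v)$. Step 8: compute $y\in\arg\min\{\sum_a\sum_v\phi^a_vy^a_v:\sum_a\sum_v v\,y^a_v\le\beta,\ \sum_vy^a_v=1\ \forall a,\ y^a_v\in\{0,1\}\}$. Output $\pi^a_{ABMA}(T)=\pi^a_v$ for the $v$ with $y^a_v=1$. *)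

From HB Require Import structures.
From mathcomp Require Import all_boot all_order all_algebra.
From mathcomp Require Import all_classical all_reals ereal.
Set Implicit Arguments. Unset Strict Implicit. Unset Printing Implicit Defensive.
Import Order.TTheory GRing.Theory Num.Theory.
Local Open Scope classical_set_scope.
Local Open Scope ring_scope.

(* The single-agent model of one agent: state sets, utility f, dynamics h, g,
   and the agent's loss ell over the prediction window {T+1,...,T+n}
   (indexed by 'I_n, index k meaning time T+1+k). *)
Record agent_model (R : realType) (nx nu nth npi n : nat) := AgentModel {
  Xs : set 'cV[R]_nx;
  Us : set 'cV[R]_nu;
  Ths : set 'cV[R]_nth;
  f : 'cV[R]_nx -> 'cV[R]_nu -> 'cV[R]_nth -> 'cV[R]_npi -> R;
  h : 'cV[R]_nx -> 'cV[R]_nu -> 'cV[R]_nx;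
  g : 'cV[R]_nx -> 'cV[R]_nu -> 'cV[R]_nth -> 'cV[R]_npi -> 'cV[R]_nth;
  loss : ('I_n -> 'cV[R]_nx) -> ('I_n -> 'cV[R]_nu) -> R }.

Definition feasible_traj (R : realType) (nx nu nth npi n : nat)
  (M : agent_model R nx nu nth npi n) (T : nat)
  (x0 : 'cV[R]_nx) (th0 : 'cV[R]_nth) (pi : nat -> 'cV[R]_npi)
  (x : nat -> 'cV[R]_nx) (u : nat -> 'cV[R]_nu) (th : nat -> 'cV[R]_nth) : Prop :=
  [/\ x 0%N = x0, th 0%N = th0,
   (forall t, (t <= T + n)%N ->
      [/\ Xs M (x t), Ths M (th t), Us M (u t) &
          forall u', Us M u' ->
            f M (h M (x t) u') u' (th t) (pi t)
              <= f M (h M (x t) (u t)) (u t) (th t) (pi t)]) &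
   (forall t, (t < T + n)%N ->
      x t.+1 = h M (x t) (u t) /\ th t.+1 = g M (x t) (u t) (th t) (pi t))].

(* varphi^a(x0, theta0, {pi_i}_{i=0}^{T+n}): the minimum (infimum, +oo if no
   feasible trajectory) of the loss over {x_t,u_t}_{t=T+1}^{T+n}. *)
Definition varphi (R : realType) (nx nu nth npi n : nat)
  (M : agent_model R nx nu nth npi n) (T : nat)
  (x0 : 'cV[R]_nx) (th0 : 'cV[R]_nth) (pi : nat -> 'cV[R]_npi) : \bar R :=
  ereal_inf [set e | exists x u th, feasible_traj M T x0 th0 pi x u th /\
     e = (loss M (fun k : 'I_n => x (T + 1 + k)%N)
                 (fun k : 'I_n => u (T + 1 + k)%N))%:E].

Definition full_seq (R : realType) (npi n T : nat)
  (past : nat -> 'cV[R]_npi) (fut : 'I_n -> 'cV[R]_npi) : nat -> 'cV[R]_npi :=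
  fun i => if (i <= T)%N then past i
           else match (insub (i - T.+1)%N : option 'I_n) with
                | Some k => fut k | None => past i end.

Definition vle (R : realType) (m : nat) (v w : 'cV[R]_m) : Prop :=
  forall i, v i ord0 <= w i ord0.

Definition assignment_ok (R : realType) (m : nat) (A Vi : finType)
  (vv : Vi -> 'cV[R]_m) (beta : 'cV[R]_m) (y : A -> Vi -> bool) : Prop :=
  (forall a, (\sum_(v : Vi) nat_of_bool (y a v))%N = 1%N) /\
  vle (\sum_(a : A) \sum_(v : Vi) (nat_of_bool (y a v))%:R *: vv v) beta.

Definition Omega (R : realType) (m npi n : nat) (A Vi : finType)
  (vv : Vi -> 'cV[R]_m) (beta : 'cV[R]_m) (S : Vi -> set ('I_n -> 'cV[R]_npi))
  : set (A -> 'I_n -> 'cV[R]_npi) :=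
  [set w | exists y : A -> Vi -> bool, assignment_ok vv beta y /\
            forall a v, y a v -> S v (w a)].

From HB Require Import structures.
From mathcomp Require Import all_boot all_order all_algebra.
From mathcomp Require Import all_classical all_reals ereal.
Import Order.TTheory GRing.Theory Num.Theory.
Local Open Scope classical_set_scope.
Local Open Scope ring_scope.

(* With the initial conditions known, the joint loss is the sum of the
   per-agent values phi^a, and an admissible assignment selects exactly one
   option v for every agent a.  For a fixed assignment the sum is therefore
   minimised agent by agent over S_v, which is what Steps 4-5 precompute, and
   what remains is the choice of the assignment, i.e. Step 8. *)

Lemma one_hot_witness {Vi : finType} {z : Vi -> bool} :
  (\sum_(v : Vi) nat_of_bool (z v))%N = 1%N -> exists v0, z v0.
Proof.
case: (pickP z) => [v0 zv0 _|z0]; first by exists v0.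
by rewrite big1 // => v _; rewrite z0.
Qed.

Lemma sum_one_hotE {R : numDomainType} {Vi : finType}
    (F : Vi -> \bar R) {z : Vi -> bool} {v0 : Vi} :
  (\sum_(v : Vi) nat_of_bool (z v))%N = 1%N -> z v0 ->
  (\sum_(v : Vi) (nat_of_bool (z v))%:R%:E * F v = F v0)%E.
Proof.
rewrite (bigD1 v0) //= => + zv0; rewrite zv0 add1n => -[others0].
rewrite (bigD1 v0) //= zv0 mul1e big1 ?adde0 // => v v_neq_v0.
have : (nat_of_bool (z v) <= 0)%N by rewrite -others0 (bigD1 v) //= leq_addr.
by case: (z v) => // _; rewrite mul0e.
Qed.

Section AssignmentDecomposition.
Context {R : realType} {A Vi : finType} {W : Type}.
Context {phi : A -> W -> \bar R} {S : Vi -> set W}.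
Context {admissible : (A -> Vi -> bool) -> Prop}.
Hypothesis admissible_one_hot : forall y, admissible y ->
  forall a, (\sum_(v : Vi) nat_of_bool (y a v))%N = 1%N.

Definition assigned (y : A -> Vi -> bool) : set (A -> W) :=
  [set w | forall a v, y a v -> S v (w a)].

Definition assignment_cost (piv : A -> Vi -> W) (y : A -> Vi -> bool) :=
  (\sum_(a : A) \sum_(v : Vi) (nat_of_bool (y a v))%:R%:E * phi a (piv a v))%E.

Context {piv : A -> Vi -> W}.
Hypothesis piv_in : forall a v, S v (piv a v).
Hypothesis piv_min : forall a v w, S v w -> (phi a (piv a v) <= phi a w)%E.

Lemma assignment_cost_le_sum {y w} : admissible y -> assigned y w ->
  (assignment_cost piv y <= \sum_(a : A) phi a (w a))%E.
Proof.
move=> y_adm w_in; apply: lee_sum => a _.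
have y_one_hot := admissible_one_hot _ y_adm a.
have [v0 yv0] := one_hot_witness y_one_hot.
by rewrite (sum_one_hotE _ y_one_hot yv0); apply/piv_min/w_in.
Qed.

Context {y : A -> Vi -> bool} {out : A -> W}.
Hypothesis y_adm : admissible y.
Hypothesis y_min : forall y', admissible y' ->
  (assignment_cost piv y <= assignment_cost piv y')%E.
Hypothesis outE : forall a v, y a v -> out a = piv a v.

Lemma assigned_out : assigned y out.
Proof. by move=> a v yav; rewrite (outE _ _ yav); apply: piv_in. Qed.

Lemma sum_out_eq_assignment_cost :
  (\sum_(a : A) phi a (out a) = assignment_cost piv y)%E.
Proof.
apply: eq_bigr => a _.
have y_one_hot := admissible_one_hot _ y_adm a.
have [v0 yv0] := one_hot_witness y_one_hot.
by rewrite (sum_one_hotE _ y_one_hot yv0) (outE _ _ yv0).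
Qed.

Lemma out_minimizes {y' w} : admissible y' -> assigned y' w ->
  (\sum_(a : A) phi a (out a) <= \sum_(a : A) phi a (w a))%E.
Proof.
move=> y'_adm w_in; rewrite sum_out_eq_assignment_cost.
exact: le_trans (y_min _ y'_adm) (assignment_cost_le_sum y'_adm w_in).
Qed.

End AssignmentDecomposition.

Theorem corollary5 (R : realType) (A : finType)
  (nx nu nth : A -> nat) (npi n T m : nat)
  (Pi : set 'cV[R]_npi)
  (model : forall a, agent_model R (nx a) (nu a) (nth a) npi n)
  (* (A8): each agent's loss is bounded *)
  (Hloss : forall a, exists Mb : R, forall xs us, `|loss (model a) xs us| <= Mb)
  (* (A10): finite set V of vectors (indexed injectively by Vi), S_v ⊆ Pi^n, beta *)
  (Vi : finType) (vv : Vi -> 'cV[R]_m) (Hvv : injective vv) (beta : 'cV[R]_m)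
  (S : Vi -> set ('I_n -> 'cV[R]_npi))
  (HS : forall v w, S v w -> forall k, Pi (w k))
  (* fixed initial conditions and past incentives *)
  (x0 : forall a, 'cV[R]_(nx a)) (th0 : forall a, 'cV[R]_(nth a))
  (Hx0 : forall a, Xs (model a) (x0 a)) (Hth0 : forall a, Ths (model a) (th0 a))
  (past : A -> nat -> 'cV[R]_npi)
  (* Steps 4-5 (with Step 2 replaced by hat x_0 = x0, hat theta_0 = theta0) *)
  (piv : A -> Vi -> 'I_n -> 'cV[R]_npi)
  (Hpiv : forall a v, S v (piv a v) /\
     forall w, S v w ->
       (varphi (model a) T (x0 a) (th0 a) (full_seq T (past a) (piv a v))
         <= varphi (model a) T (x0 a) (th0 a) (full_seq T (past a) w))%E)
  (* Step 8 *)
  (y : A -> Vi -> bool)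
  (Hy : assignment_ok vv beta y /\
     forall y', assignment_ok vv beta y' ->
      (\sum_(a : A) \sum_(v : Vi) (nat_of_bool (y a v))%:R%:E
          * varphi (model a) T (x0 a) (th0 a) (full_seq T (past a) (piv a v))
       <= \sum_(a : A) \sum_(v : Vi) (nat_of_bool (y' a v))%:R%:E
          * varphi (model a) T (x0 a) (th0 a) (full_seq T (past a) (piv a v)))%E)
  (* output of the algorithm *)
  (out : A -> 'I_n -> 'cV[R]_npi)
  (Hout : forall a v, y a v -> out a = piv a v) :
  Omega vv beta S out /\
  forall w, Omega vv beta S w ->
    (\sum_(a : A) varphi (model a) T (x0 a) (th0 a) (full_seq T (past a) (out a))
      <= \sum_(a : A) varphi (model a) T (x0 a) (th0 a) (full_seq T (past a) (w a)))%E.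
Proof.
pose phi (a : A) (w : 'I_n -> 'cV[R]_npi) :=
  varphi (model a) T (x0 a) (th0 a) (full_seq T (past a) w).
have one_hot (y' : A -> Vi -> bool) : assignment_ok vv beta y' ->
    forall a, (\sum_(v : Vi) nat_of_bool (y' a v))%N = 1%N by case.
have piv_in a v : S v (piv a v) by case: (Hpiv a v).
have piv_min a v w : S v w -> (phi a (piv a v) <= phi a w)%E.
  by case: (Hpiv a v) => _; apply.
have [y_ok y_min] := Hy.
split; first by exists y; split; last exact: (assigned_out piv_in Hout).
move=> w [y' [y'_ok w_in]].
exact: (out_minimizes (phi := phi) (S := S) one_hot piv_min y_ok y_min Hout
          y'_ok w_in).
Qed.
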